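(* Let $\kappa$ be an infinite cardinal, $\mathcal{U}$ a superfine ultrafilter on $\kappa$, and consider the ring of Euclidean integers $\mathbb{Z}^\kappa/\mathcal{U}$ with $\Sigma(\mathbf{x})=[\mathbf{f}_{\mathbf{x}}]_{\mathcal{U}}$. Let $\eta<\kappa$ and let $(x_{\beta\gamma})_{\beta,\gamma<\kappa}$ be integers with $x_{\beta\gamma}=0$ whenever $\beta\ge2^\eta$ or $\gamma\ge2^\eta$. Define the double sum $\sum_{\beta,\gamma}x_{\beta\gamma}=\sum_\varepsilon w_\varepsilon$ where $w_\varepsilon=\sum_{\beta\vee\gamma=\varepsilon}x_{\beta\gamma}$, and define $\mathbf{y}$ by $y_\alpha=x_{\beta\gamma}$ if $\alpha=2^\eta\beta+\gamma$ with $\beta,\gamma<2^\eta$, and $y_\alpha=0$ otherwise. Then $\sum_{\beta,\gamma}x_{\beta\gamma}=\sum_\alpha y_\alpha$.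
   Context: Every ordinal $\alpha$ has a unique base-2 normal form $\alpha=2^{\alpha_1}+\dots+2^{\alpha_n}$ with $\alpha_1>\dots>\alpha_n$; put $L_\alpha=\{\alpha_1,\dots,\alpha_n\}$. Formal inclusion: $\alpha\sqsubseteq\beta$ iff $L_\alpha\subseteq L_\beta$, $\alpha\sqsubset\beta$ iff $L_\alpha\subsetneq L_\beta$. $\alpha\vee\beta$ is the ordinal $\gamma$ with $L_\gamma=L_\alpha\cup L_\beta$. For $\mathbf{x}\in\mathbb{Z}^\kappa$, $\mathbf{f}_{\mathbf{x}}(\alpha)=\sum_{\beta\sqsubseteq\alpha}x_\beta$, and $[\cdot]_{\mathcal U}$ is the class in the ultrapower $\mathbb{Z}^\kappa/\mathcal U$. For $\theta<\kappa$ the cone is $C(\theta)=\{\alpha<\kappa\mid\theta\sqsubset\alpha\}$. For $\eta<\kappa$, $D(\eta)=\{2^{\eta\cdot2}\alpha+2^\eta\xi+\xi\mid \xi<2^\eta,\ \alpha<\kappa\}$ (ordinal arithmetic). An ultrafilter on $\kappa$ is superfine if it contains $D(\eta)\cap C(\theta)$ for all $\eta,\theta<\kappa$ (in particular it contains all cones). *)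

From HB Require Import structures.
From mathcomp Require Import all_boot all_order all_algebra.
From mathcomp Require Import boolp classical_sets cardinality fsbigop.
Set Implicit Arguments. Unset Strict Implicit. Unset Printing Implicit Defensive.
Import GRing.Theory Num.Theory.
Local Open Scope classical_set_scope.
Local Open Scope ring_scope.

(* The infinite cardinal kappa is represented by a type K carrying a strict
   well-order R whose order type is kappa: elements of K are the ordinals
   < kappa. *)
Section Ordinals.
Variables (K : choiceType) (R : K -> K -> Prop).

Definition seg (c : K) := {y : K | R y c}.
Definition segR (c : K) (u v : seg c) : Prop := R (proj1_sig u) (proj1_sig v).

Definition order_iso (A B : Type) (ra : A -> A -> Prop) (rb : B -> B -> Prop) :=
  exists f : A -> B, bijective f /\ forall u v, ra u v <-> rb (f u) (f v).

Definition sumR (A B : Type) (ra : A -> A -> Prop) (rb : B -> B -> Prop)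
  (u v : A + B) : Prop :=
  match u, v with
  | inl a1, inl a2 => ra a1 a2
  | inr b1, inr b2 => rb b1 b2
  | inl _, inr _ => True
  | inr _, inl _ => False
  end.

(* ordinal product a * b = b copies of a : ordered by the b-coordinate first *)
Definition prodR (A B : Type) (ra : A -> A -> Prop) (rb : B -> B -> Prop)
  (u v : A * B) : Prop :=
  rb u.2 v.2 \/ (u.2 = v.2 /\ ra u.1 v.1).

(* finite subsets of the segment below a, ordered by the largest element of
   the symmetric difference: this well-order has order type 2^a *)
Definition fin_sub (a : K) := {S : set K | finite_set S /\ S `<=` [set y | R y a]}.
Definition fin_subR (a : K) (S T : fin_sub a) : Prop :=
  exists m, proj1_sig T m /\ ~ proj1_sig S m /\
    forall z, R m z -> (proj1_sig S z <-> proj1_sig T z).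

Definition oadd (a b c : K) := order_iso (@segR c) (sumR (@segR a) (@segR b)).
Definition omul (a b c : K) := order_iso (@segR c) (prodR (@segR a) (@segR b)).
Definition opow2 (a c : K) := order_iso (@segR c) (@fin_subR a).

(* z = 2^{s_1} + (2^{s_2} + ( ... + 0)) with s_1 > s_2 > ... *)
Fixpoint onf (s : seq K) (z : K) : Prop :=
  match s with
  | [::] => forall y, ~ R y z
  | e :: s' => exists q r, opow2 e q /\ onf s' r /\ oadd q r z /\
                 (forall e', e' \in s' -> R e' e)
  end.

Definition L (a : K) : set K := [set e | exists s, onf s a /\ e \in s].

Definition infinite_cardinal : Prop :=
  [/\ (forall a, ~ R a a),
      (forall a b c, R a b -> R b c -> R a c),
      (forall a b, R a b \/ a = b \/ R b a) &
      well_founded R] /\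
  (exists f : nat -> K, injective f) /\
  (forall c, ~ exists f : K -> seg c, injective f).

Definition cone (th : K) : set K := [set a | L th `<=` L a /\ L th <> L a].

(* D(eta) = { 2^(eta*2) alpha + 2^eta xi + xi | xi < 2^eta, alpha < kappa } *)
Definition Dset (eta : K) : set K :=
  [set z | exists (xi a e q p r s t : K),
     [/\ oadd eta eta e, opow2 e q, opow2 eta p & R xi p] /\
     [/\ omul q a r, omul p xi s, oadd r s t & oadd t xi z]].

Definition ultrafilter (U : set (set K)) : Prop :=
  [/\ U setT, ~ U set0,
      (forall A B, A `<=` B -> U A -> U B),
      (forall A B, U A -> U B -> U (A `&` B)) &
      (forall A, U A \/ U (~` A))].

Definition superfine (U : set (set K)) : Prop :=
  ultrafilter U /\ forall eta th, U (Dset eta `&` cone th).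

Definition fsum (x : K -> int) (a : K) : int :=
  \sum_(b \in [set b | L b `<=` L a]) x b.

Definition wjoin (x : K -> K -> int) (e : K) : int :=
  \sum_(q \in [set q : K * K | L e = L q.1 `|` L q.2]) x q.1 q.2.

(* Sigma(x) = Sigma(x') in Z^kappa / U, i.e. [f_x]_U = [f_x']_U *)
Definition ueq (U : set (set K)) (f g : K -> int) : Prop :=
  U [set a | f a = g a].

Definition decomp (eta a b g : K) : Prop :=
  exists p m, [/\ opow2 eta p, R b p, R g p, omul p b m & oadd m g a].

End Ordinals.

(* Every ordinal below kappa is order-isomorphic to an initial segment of the finite sets of
   ordinals ordered by the largest element of their symmetric difference, the finite set being
   exactly L_alpha.  Under this correspondence, a sum of ordinals with separated exponents becomes
   a union, and 2^eta * beta for beta < 2^eta becomes the shift eta + L_beta.  For alpha in D(eta)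
   this gives L_alpha = L_r U (eta + L_xi) U L_xi, where the exponents of r = 2^(eta*2) alpha' are
   at least eta*2 and those of xi lie below eta.  Consequently every pair beta, gamma formally
   below alpha has exactly one join, and, if beta, gamma < 2^eta, exactly one 2^eta beta + gamma,
   both formally below alpha; conversely both kinds of ordinals formally below alpha come from
   such pairs.  So f_w(alpha) and f_y(alpha) are both the sum of the x_(beta gamma) over these
   pairs, and f_w and f_y agree on D(eta), which belongs to U. *)

From HB Require Import structures.
From mathcomp Require Import all_boot all_order all_algebra.
From mathcomp Require Import finmap boolp classical_sets cardinality fsbigop.
Set Implicit Arguments. Unset Strict Implicit.
Import GRing.Theory.
Local Open Scope classical_set_scope.

Lemma proj1_sig_inj A (P : A -> Prop) (u v : {x | P x}) : proj1_sig u = proj1_sig v -> u = v.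
Proof. case: u => a pa; case: v => b pb /= eab; subst b; congr exist; exact: Prop_irrelevance. Qed.

Definition wellorder A (r : A -> A -> Prop) :=
  [/\ (forall a, ~ r a a), (forall a b c, r a b -> r b c -> r a c),
      (forall a b, r a b \/ a = b \/ r b a) & well_founded r].

Definition initseg A (r : A -> A -> Prop) (x : A) := {u : A | r u x}.
Definition initsegR A (r : A -> A -> Prop) (x : A) (u v : initseg r x) := r (proj1_sig u) (proj1_sig v).

Lemma well_founded_sig A (P : A -> Prop) (r : A -> A -> Prop) : well_founded r ->
  well_founded (fun u v : {x | P x} => r (proj1_sig u) (proj1_sig v)).
Proof.
move=> wf u; case: u => a pa.
elim: (wf a) pa => {}a _ IH pa; constructor => -[b pb] /= rba; exact: IH.
Qed.

Lemma wellorder_initseg A (r : A -> A -> Prop) x : wellorder r -> wellorder (@initsegR A r x).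
Proof.
case=> irr tr tot wf; split.
- by move=> a; apply: irr.
- by move=> a b c; apply: tr.
- move=> a b; case: (tot (proj1_sig a) (proj1_sig b)) => [|[|]]; auto.
  by move=> e; right; left; apply: proj1_sig_inj.
- exact: (@well_founded_sig _ _ _ wf).
Qed.

Lemma wf_incr_not_below A (r : A -> A -> Prop) (f : A -> A) : well_founded r ->
  (forall u v, r u v -> r (f u) (f v)) -> forall x, ~ r (f x) x.
Proof.
move=> wf mono x; elim: (wf x) => {}x _ IH rfx.
exact: (IH _ rfx (mono _ _ rfx)).
Qed.

Lemma order_iso_refl A (r : A -> A -> Prop) : order_iso r r.
Proof. by exists id; split => //; exists id. Qed.

Lemma order_iso_sym A B (ra : A -> A -> Prop) (rb : B -> B -> Prop) :
  order_iso ra rb -> order_iso rb ra.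
Proof.
case=> f [[g fK gK] hf]; exists g; split; first by exists f.
by move=> u v; rewrite hf !gK.
Qed.

Lemma order_iso_trans A B C (ra : A -> A -> Prop) (rb : B -> B -> Prop) (rc : C -> C -> Prop) :
  order_iso ra rb -> order_iso rb rc -> order_iso ra rc.
Proof.
case=> f [bf hf]; case=> g [bg hg]; exists (g \o f); split; first exact: bij_comp.
by move=> u v; rewrite hf hg.
Qed.

Lemma order_iso_of_mono A B (ra : A -> A -> Prop) (rb : B -> B -> Prop) (f : A -> B) :
  (forall u v, ra u v \/ u = v \/ ra v u) ->
  (forall b, ~ rb b b) -> (forall b1 b2 b3, rb b1 b2 -> rb b2 b3 -> rb b1 b3) ->
  (forall u v, ra u v -> rb (f u) (f v)) -> (forall b, exists u, f u = b) ->
  order_iso ra rb.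
Proof.
move=> tot irr tr mono surj.
have inj : injective f.
  move=> u v fuv; case: (tot u v) => [/mono|[//|/mono]]; rewrite fuv => /irr [].
pose g b := proj1_sig (cid (surj b)).
have gK : cancel g f by move=> b; rewrite /g; case: cid.
exists f; split; first by exists g => // u; apply: inj; rewrite gK.
move=> u v; split; first exact: mono.
move=> h; case: (tot u v) => [//|[e|/mono h']]; first by subst; case: (irr _ h).
by case: (irr _ (tr _ _ _ h h')).
Qed.

Lemma order_iso_sumR A A' B B' (ra : A -> A -> Prop) (ra' : A' -> A' -> Prop)
  (rb : B -> B -> Prop) (rb' : B' -> B' -> Prop) :
  order_iso ra ra' -> order_iso rb rb' -> order_iso (sumR ra rb) (sumR ra' rb').
Proof.
case=> f [[f' fK f'K] hf]; case=> g [[g' gK g'K] hg].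
exists (fun u => match u with inl a => inl (f a) | inr b => inr (g b) end); split.
  exists (fun u => match u with inl a => inl (f' a) | inr b => inr (g' b) end).
    by case=> [a|b]; rewrite ?fK ?gK.
  by case=> [a|b]; rewrite ?f'K ?g'K.
by case=> [a|b] [a'|b'] /=.
Qed.

Lemma order_iso_prodR A A' B B' (ra : A -> A -> Prop) (ra' : A' -> A' -> Prop)
  (rb : B -> B -> Prop) (rb' : B' -> B' -> Prop) :
  order_iso ra ra' -> order_iso rb rb' -> order_iso (prodR ra rb) (prodR ra' rb').
Proof.
case=> f [[f' fK f'K] hf]; case=> g [[g' gK g'K] hg].
exists (fun u => (f u.1, g u.2)); split.
  exists (fun u => (f' u.1, g' u.2)); first by case=> a b /=; rewrite fK gK.
  by case=> a b /=; rewrite f'K g'K.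
case=> a b [a' b'] /=; rewrite /prodR /= hf hg; split.
  by case=> [|[-> ?]]; [left|right].
case=> [|[e ?]]; [left|right] => //; split => //.
by rewrite -(gK b) e gK.
Qed.

Lemma initseg_iso_nlt A (r : A -> A -> Prop) x y : wellorder r ->
  order_iso (@initsegR A r x) (@initsegR A r y) -> ~ r x y.
Proof.
move=> [irr tr tot wf] [h [[h' hK h'K] hh]] rxy.
pose F (v : initseg r y) : initseg r y :=
  exist _ (proj1_sig (h' v)) (tr _ _ _ (proj2_sig (h' v)) rxy).
have mono u v : initsegR u v -> initsegR (F u) (F v).
  by move=> huv; rewrite /initsegR /F /=; rewrite -[u]h'K -[v]h'K in huv; apply/hh.
apply: (wf_incr_not_below (x := exist _ x rxy) (well_founded_sig wf) mono).
exact: (proj2_sig (h' _)).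
Qed.

Lemma initseg_iso_inj A (r : A -> A -> Prop) x y : wellorder r ->
  order_iso (@initsegR A r x) (@initsegR A r y) -> x = y.
Proof.
move=> wr hxy; have [_ _ tot _] := wr.
case: (tot x y) => [/(initseg_iso_nlt wr hxy) []|[//|]].
by move/(initseg_iso_nlt wr (order_iso_sym hxy)).
Qed.

Lemma order_iso_initseg A B (ra : A -> A -> Prop) (rb : B -> B -> Prop) x y :
  wellorder ra -> wellorder rb ->
  order_iso (@initsegR A ra x) (@initsegR B rb y) ->
  forall u, ra u x -> exists w, rb w y /\ order_iso (@initsegR A ra u) (@initsegR B rb w).
Proof.
move=> [irra tra tota wfa] [irrb trb totb wfb] [h [[h' hK h'K] hh]] u ux.
set U : initseg ra x := exist _ u ux.
exists (proj1_sig (h U)); split; first exact: (proj2_sig (h U)).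
pose F (v : initseg ra u) : initseg rb (proj1_sig (h U)) :=
  exist _ (proj1_sig (h (exist _ (proj1_sig v) (tra _ _ _ (proj2_sig v) ux))))
       (iffLR (hh (exist _ _ _) U) (proj2_sig v)).
apply: (@order_iso_of_mono _ _ _ _ F).
- move=> a b; case: (tota (proj1_sig a) (proj1_sig b)) => [|[|]]; auto.
  by move=> e; right; left; apply: proj1_sig_inj.
- by move=> b; apply: irrb.
- by move=> b1 b2 b3; apply: trb.
- by move=> a b ab; rewrite /initsegR /F /=; apply/(iffLR (hh _ _)).
- move=> [z zw]; have zy := trb _ _ _ zw (proj2_sig (h U)).
  set Z : initseg rb y := exist _ z zy.
  have gz : ra (proj1_sig (h' Z)) u.
    have : initsegR (h (h' Z)) (h U) by rewrite h'K.
    by move/(iffRL (hh _ _)).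
  exists (exist (fun t => ra t u) _ gz); apply: proj1_sig_inj => /=.
  have -> : exist (fun u0 => ra u0 x) (proj1_sig (h' Z)) (tra _ _ _ gz ux) = h' Z by apply: proj1_sig_inj.
  by rewrite h'K.
Qed.

Lemma sumR_tot A B (ra : A -> A -> Prop) (rb : B -> B -> Prop) :
  (forall u v, ra u v \/ u = v \/ ra v u) -> (forall u v, rb u v \/ u = v \/ rb v u) ->
  forall u v, sumR ra rb u v \/ u = v \/ sumR ra rb v u.
Proof.
move=> ta tb [a|b] [a'|b'] /=; auto.
- by case: (ta a a') => [|[->|]]; auto.
- by case: (tb b b') => [|[->|]]; auto.
Qed.

Lemma prodR_tot A B (ra : A -> A -> Prop) (rb : B -> B -> Prop) :
  (forall u v, ra u v \/ u = v \/ ra v u) -> (forall u v, rb u v \/ u = v \/ rb v u) ->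
  forall u v, prodR ra rb u v \/ u = v \/ prodR ra rb v u.
Proof.
move=> ta tb [a b] [a' b']; rewrite /prodR /=.
case: (tb b b') => [|[e|]]; auto; subst.
case: (ta a a') => [|[e|]]; [left|right;left|right;right]; subst; auto.
Qed.

Lemma wf_minimal A (r : A -> A -> Prop) (P : A -> Prop) : well_founded r ->
  (exists x, P x) -> exists x, P x /\ forall y, r y x -> ~ P y.
Proof.
move=> wf [x px]; elim: (wf x) px => {}x _ IH px.
case: (pselect (exists y, r y x /\ P y)) => [[y [ryx py]]|h]; first exact: IH ryx py.
by exists x; split => // y ryx py; apply: h; exists y.
Qed.

Lemma finite_set_setU T (A B : set T) :
  finite_set A -> finite_set B -> finite_set (A `|` B).
Proof. by rewrite finite_setU. Qed.

Lemma finite_set_subsets (T : eqType) (A : set T) : finite_set A -> finite_set [set S | S `<=` A].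
Proof.
move=> /finite_seqP [l ->]; elim: l => [|a l IH].
  apply: (sub_finite_set (B := [set set0])); last exact: finite_set1.
  move=> S /= hS; apply/seteqP; split => // z /hS.
  by rewrite /= in_nil.
apply: (sub_finite_set (B := [set S : set T | S `<=` [set` l]] `|`
   ((fun S => S `|` [set a]) @` [set S : set T | S `<=` [set` l]]))); last first.
  by rewrite finite_setU; split => //; apply: finite_image.
move=> S /= hS.
have h1 : (S `\` [set a]) `<=` [set` l].
  move=> z [Sz nz]; have := hS _ Sz; rewrite /= inE => /orP[/eqP za|//]; by case: nz.
case: (pselect (S a)) => Sa.
  right; exists (S `\` [set a]) => //; apply/seteqP; split.
    by move=> z [[]|->].
  by move=> z Sz; case: (pselect (z = a)) => [->|nz]; [right|left].
left; move=> z Sz; apply: h1; split => // za; apply: Sa; by rewrite -za.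
Qed.

Section FiniteSums.
Local Open Scope ring_scope.
Variable V : nmodType.

Lemma fsbig_seq (I : choiceType) (A : set I) (r : seq I) (f : I -> V) :
  A `<=` [set` r] -> uniq r ->
  \sum_(i \in A) f i = \sum_(i <- r) (if `[< A i >] then f i else 0).
Proof.
move=> Ar ur.
rewrite (@eq_fsbigr _ _ _ _ f (fun i => if `[< A i >] then f i else 0)); last first.
  by move=> i; rewrite inE => Ai; rewrite asboolT.
apply: fsbig_fwiden => // i [_ nA] /=; by rewrite asboolF.
Qed.

Lemma big_if_single (I : eqType) (r : seq I) (P : I -> Prop) (f : I -> V) i0 :
  uniq r -> i0 \in r -> (forall i, P i <-> i = i0) ->
  \sum_(i <- r) (if `[< P i >] then f i else 0) = f i0.
Proof.
elim: r => [//|a r IH] /= /andP[nar ur] ir hP; rewrite big_cons.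
case: (pselect (a = i0)) => [ea|na].
  subst a; rewrite asboolT; last exact/hP.
  rewrite big1_seq ?addr0 // => i /= ir'; rewrite asboolF // => /hP ei; subst i.
  by rewrite ir' in nar.
rewrite asboolF; last by move/hP.
rewrite add0r IH //; move: ir; rewrite inE => /orP[/eqP e1|//]; by case: na.
Qed.

Lemma big_if_zero (I : eqType) (r : seq I) (P : I -> Prop) (f : I -> V) :
  (forall i, i \in r -> P i -> f i = 0) ->
  \sum_(i <- r) (if `[< P i >] then f i else 0) = 0.
Proof.
move=> h; rewrite big1_seq // => i /= ir; case: (pselect (P i)) => Pi.
  by rewrite asboolT // h.
by rewrite asboolF.
Qed.

End FiniteSums.

Section CantorNormalForm.
Variables (K : choiceType) (R : K -> K -> Prop).
Hypothesis sR : wellorder R.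

Let irr : forall a, ~ R a a. Proof. by case: sR. Qed.
Let tr : forall a b c, R a b -> R b c -> R a c. Proof. by case: sR. Qed.
Let tot : forall a b, R a b \/ a = b \/ R b a. Proof. by case: sR. Qed.
Let wfR : well_founded R. Proof. by case: sR. Qed.

(* The order [fin_subR] without a bound: the largest element of the symmetric difference lies in
   the larger set.  Initial segments of [cnf] model the ordinals below [kappa] by their base-2
   normal forms. *)
Definition lex (T S : set K) := exists m, S m /\ ~ T m /\ forall z, R m z -> (T z <-> S z).
Definition cnf := {T : set K | finite_set T}.
Definition cnfR (u v : cnf) := lex (proj1_sig u) (proj1_sig v).

Lemma lex_irr T : ~ lex T T.
Proof. by case=> m [? [? _]]. Qed.

Lemma lex_trans A B C : lex A B -> lex B C -> lex A C.
Proof.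
move=> [m1 [B1 [A1 h1]]] [m2 [C2 [B2 h2]]].
case: (tot m1 m2) => [r12|[e|r21]].
- exists m2; split => //; split; first by rewrite (h1 _ r12).
  by move=> z rz; rewrite (h1 _ (tr r12 rz)) h2.
- by subst.
- exists m1; split; first by rewrite -(h2 _ r21).
  split => // z rz; rewrite h1 // h2 //; exact: tr rz.
Qed.

Lemma finite_set_max (D : set K) : finite_set D -> D !=set0 ->
  exists m, D m /\ forall z, D z -> z = m \/ R z m.
Proof.
move=> /finite_seqP [s ->]; elim: s => [[z]//|a s IH _].
case: (pselect ([set` s] !=set0)) => [/IH [m [sm hm]]|s0].
  case: (tot a m) => [am|[e|ma]].
  - exists m; split; first by rewrite /= inE sm orbT.
    by move=> z; rewrite /= inE => /orP[/eqP->|/hm]; auto.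
  - subst; exists m; split; first by rewrite /= inE eqxx.
    by move=> z; rewrite /= inE => /orP[/eqP->|/hm]; auto.
  - exists a; split; first by rewrite /= inE eqxx.
    move=> z; rewrite /= inE => /orP[/eqP->|/hm [->|zm]]; auto.
    by right; apply: tr ma.
exists a; split; first by rewrite /= inE eqxx.
move=> z; rewrite /= inE => /orP[/eqP->|zs]; auto.
by case: s0; exists z.
Qed.

Lemma lex_tot T S : finite_set T -> finite_set S -> lex T S \/ T = S \/ lex S T.
Proof.
move=> fT fS; set D := (T `\` S) `|` (S `\` T).
have fD : finite_set D by rewrite /D finite_setU; split; apply: finite_setD.
case: (pselect (D !=set0)) => [D0|D0]; last first.
  right; left; apply/seteqP; split => z zz; apply: contrapT => nz; apply: D0; exists z;
  by [left|right].
have [m [Dm hm]] := finite_set_max fD D0.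
have agree : forall z, R m z -> (T z <-> S z).
  move=> z mz.
  have nD : ~ D z by move=> /hm [e|zm]; [subst; exact: irr mz| exact: irr (tr mz zm)].
  split => hz; apply: contrapT => nz; apply: nD; by [left|right].
case: Dm => [[Tm Sm]|[Sm Tm]].
  right; right; exists m; split => //; split => // z /agree; tauto.
by left; exists m.
Qed.

Lemma lex_ub T G c : lex T G -> (forall g, G g -> R g c) -> forall t, T t -> R t c.
Proof.
move=> [m [Gm [Tm h]]] hG t Tt.
case: (tot t m) => [tm|[e|mt]]; first exact: tr tm (hG _ Gm).
  by subst.
by apply: hG; rewrite -h.
Qed.

Lemma lex_ub_le T G c : lex T G -> (forall g, G g -> g = c \/ R g c) -> forall t, T t -> t = c \/ R t c.
Proof.
move=> [m [Gm [Tm h]]] hG t Tt.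
case: (tot t m) => [tm|[e|mt]]; last by apply: hG; rewrite -h.
  by right; case: (hG _ Gm) => [<-//|mc]; exact: tr tm mc.
by subst.
Qed.

Lemma lex0 T : ~ lex T set0.
Proof. by case=> m []. Qed.

Lemma lex1 T e : finite_set T -> (lex T [set e] <-> (forall t, T t -> R t e)).
Proof.
move=> fT; split.
  move=> h t Tt; have := lex_ub_le h (fun g (eg : [set e] g) => or_introl eg) Tt.
  case=> // te; subst t; case: h => m [em [Tm _]]; by rewrite em in Tm.
move=> h; exists e; split => //; split; first by move/h/irr.
move=> z ez; split; first by move/h => ze; case: (irr (tr ez ze)).
by move=> ze; rewrite ze in ez; case: (irr ez).
Qed.

Lemma lex_proper_sub T S : finite_set S -> T `<=` S -> T <> S -> lex T S.
Proof.
move=> fS TS nTS.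
have fT : finite_set T := sub_finite_set TS fS.
case: (lex_tot fT fS) => [//|[//|[m [Tm [Sm _]]]]].
by case: Sm; apply: TS.
Qed.

Definition cnfD1 (u : cnf) (m : K) : cnf :=
  exist _ (proj1_sig u `\` [set m]) (finite_setD _ (proj2_sig u)).

Lemma cnfD1K (u : cnf) m : proj1_sig u m -> proj1_sig u = proj1_sig (cnfD1 u m) `|` [set m].
Proof.
move=> um; apply/seteqP; split; last by move=> z [[]|->].
by move=> z uz; case: (pselect (z = m)); [right|left].
Qed.

Lemma Acc_cnf0 (u : cnf) : ~ (proj1_sig u !=set0) -> Acc cnfR u.
Proof.
move=> u0; constructor => v; rewrite /cnfR; suff -> : proj1_sig u = set0 by move/lex0.
by apply/seteqP; split => // z uz; apply: u0; exists z.
Qed.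

Section Accessibility.
Variable m : K.
Hypothesis Acc_below : forall u : cnf, (forall t, proj1_sig u t -> R t m) -> Acc cnfR u.

(* Adding the new maximum [m] to [v] is monotone, so it follows the accessibility of [v]. *)
Lemma Acc_cnfU1 (v : cnf) : Acc cnfR v -> (forall t, proj1_sig v t -> R t m) ->
  forall u : cnf, proj1_sig u = proj1_sig v `|` [set m] -> Acc cnfR u.
Proof.
elim=> {}v _ IHv hv u eu; constructor => w; rewrite /cnfR eu => lwu.
have wle : forall t, proj1_sig w t -> t = m \/ R t m.
  by apply: (lex_ub_le lwu) => g [/hv|->]; auto.
case: (pselect (proj1_sig w m)) => wm; last first.
  by apply: Acc_below => t wt; case: (wle _ wt) => // e; subst.
apply: (IHv (cnfD1 w m)); last 2 first.
- by move=> t [/wle [->|//] /=].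
- exact: cnfD1K.
case: lwu => d [Td [wd h]].
have dm : d <> m by move=> e; subst.
exists d; split; first by case: Td.
split; first by case.
move=> z dz; split; first by case=> /(h _ dz) [//|->] /=; move=> zm; case: zm.
move=> vz; split; first by apply/(h _ dz); left.
by move=> /= e; subst; case: (irr (hv _ vz)).
Qed.

Lemma Acc_cnf_le (u : cnf) : (forall t, proj1_sig u t -> t = m \/ R t m) -> Acc cnfR u.
Proof.
move=> hu; case: (pselect (proj1_sig u m)) => um; last first.
  by apply: Acc_below => t ut; case: (hu _ ut) => // e; subst.
have hv : forall t, proj1_sig (cnfD1 u m) t -> R t m.
  by move=> t [ut ntm]; case: (hu _ ut) => // e; subst.
exact: (Acc_cnfU1 (Acc_below hv) hv (cnfD1K um)).
Qed.

End Accessibility.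

Lemma Acc_cnf_lt m (u : cnf) : (forall t, proj1_sig u t -> R t m) -> Acc cnfR u.
Proof.
elim/(well_founded_ind wfR): m u => m IH u hu.
case: (pselect (proj1_sig u !=set0)) => [u0|/Acc_cnf0//].
have [t0 [ut0 ht0]] := finite_set_max (proj2_sig u) u0.
exact: (Acc_cnf_le (IH t0 (hu _ ut0))).
Qed.

Lemma cnfR_wf : well_founded cnfR.
Proof.
move=> u; case: (pselect (proj1_sig u !=set0)) => [u0|/Acc_cnf0//].
have [t0 [ut0 ht0]] := finite_set_max (proj2_sig u) u0.
exact: (Acc_cnf_le (@Acc_cnf_lt t0)).
Qed.

Lemma wellorder_cnfR : wellorder cnfR.
Proof.
split.
- by move=> a; apply: lex_irr.
- by move=> a b c; apply: lex_trans.
- move=> a b; case: (lex_tot (proj2_sig a) (proj2_sig b)) => [|[|]]; auto.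
  by move=> e; right; left; apply: proj1_sig_inj.
- exact: cnfR_wf.
Qed.

Notation CnfSeg S := (@initsegR cnf cnfR S).
Notation Seg z := (@initsegR K R z).

Definition cnfU (a b : cnf) : cnf :=
  exist _ (proj1_sig a `|` proj1_sig b)
    (finite_set_setU (proj2_sig a) (proj2_sig b)).
Definition cnf1 (e : K) : cnf := exist _ [set e] (finite_set1 e).
Definition cnf0 : cnf := exist _ set0 (finite_set0 K).

Lemma lex_setU_below (T S G : set K) : (forall g s, G g -> S s -> R g s) ->
  lex T S -> lex T (S `|` G).
Proof.
move=> hGS [m [Sm [Tm h]]]; exists m; split; first by left.
split => // z mz; rewrite h //; split; first by left.
by case=> // Gz; case: (irr (tr mz (hGS _ _ Gz Sm))).
Qed.

Lemma lex_setU2l (S T T' : set K) : (forall t s, T' t -> S s -> R t s) ->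
  lex T T' -> lex (S `|` T) (S `|` T').
Proof.
move=> hT'S [m [T'm [Tm h]]]; exists m; split; first by right.
have nSm : ~ S m by move=> Sm; case: (irr (hT'S _ _ T'm Sm)).
split; first by case.
by move=> z mz; split; case=> [Sz|/(h _ mz) ?]; by [left|right].
Qed.

Section SumOfCnf.
Variables (S G SG : cnf).
Hypothesis G_below_S : forall g s, proj1_sig G g -> proj1_sig S s -> R g s.
Hypothesis SG_def : proj1_sig SG = proj1_sig S `|` proj1_sig G.

Let below_G_below_S (T : cnf) : cnfR T G -> forall t s, proj1_sig T t -> proj1_sig S s -> R t s.
Proof. by move=> lTG t s Tt Ss; apply: (lex_ub lTG) Tt => g Gg; exact: G_below_S. Qed.

Let sum_to_cnf (u : initseg cnfR S + initseg cnfR G) : initseg cnfR SG :=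
  match u with
  | inl T => exist _ (proj1_sig T)
      (eq_ind_r (lex _) (lex_setU_below G_below_S (proj2_sig T)) SG_def)
  | inr T => exist _ (cnfU S (proj1_sig T))
      (eq_ind_r (lex _) (lex_setU2l G_below_S (proj2_sig T)) SG_def)
  end.

Let sum_to_cnf_surj (V : initseg cnfR SG) : exists u, sum_to_cnf u = V.
Proof.
case: V => V lV.
have [m [SGm [Vm h]]] : lex (proj1_sig V) (proj1_sig S `|` proj1_sig G) by rewrite -SG_def.
case: (pselect (proj1_sig S m)) => Sm.
  have lVS : cnfR V S.
    exists m; split => //; split => // z mz; rewrite h //; split; last by left.
    by case=> // Gz; case: (irr (tr mz (G_below_S Gz Sm))).
  by exists (inl (exist _ V lVS)); apply: proj1_sig_inj.
have Gm : proj1_sig G m by case: SGm.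
pose T : cnf := exist _ _ (finite_setD (proj1_sig S) (proj2_sig V)).
have lTG : cnfR T G.
  exists m; split => //; split; first by case.
  move=> z mz; split; first by case=> /(h _ mz) [].
  move=> Gz; split; first by apply/(h _ mz); right.
  by move=> Sz; case: (irr (G_below_S Gz Sz)).
exists (inr (exist _ T lTG)); apply: proj1_sig_inj; apply: proj1_sig_inj => /=.
apply/seteqP; split; last by move=> z Vz; case: (pselect (proj1_sig S z)); [left|right].
by move=> z [Sz|[]//]; apply/(h _ (G_below_S Gm Sz)); left.
Qed.

Lemma order_iso_sumR_cnfU : order_iso (sumR (CnfSeg S) (CnfSeg G)) (CnfSeg SG).
Proof.
have [_ _ totS _] := wellorder_initseg S wellorder_cnfR.
have [_ _ totG _] := wellorder_initseg G wellorder_cnfR.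
have [irrSG trSG _ _] := wellorder_initseg SG wellorder_cnfR.
apply: (order_iso_of_mono (sumR_tot totS totG) irrSG trSG _ sum_to_cnf_surj).
case=> T [T'|T'] //= lT; rewrite /initsegR /cnfR /=.
  by apply: lex_setU_below (below_G_below_S (proj2_sig T')) (proj2_sig T).
exact: lex_setU2l (below_G_below_S (proj2_sig T')) lT.
Qed.

End SumOfCnf.

Lemma order_iso_fin_sub e : order_iso (@fin_subR K R e) (CnfSeg (cnf1 e)).
Proof.
have hl : forall T : fin_sub R e, cnfR (exist _ (proj1_sig T) (proj1 (proj2_sig T))) (cnf1 e).
  move=> [T [fT sT]]; rewrite /cnfR /=; apply/(lex1 ) => //.
pose f (T : fin_sub R e) : initseg cnfR (cnf1 e) := exist (fun u => cnfR u (cnf1 e)) _ (hl T).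
have [irrW trW _ _] := wellorder_initseg (cnf1 e) wellorder_cnfR.
apply: (@order_iso_of_mono _ _ _ _ f) => //.
- move=> [a [fa sa]] [b [fb sb]]; case: (lex_tot fa fb) => [|[e'|]]; auto.
  by subst; right; left; apply: proj1_sig_inj.
- move=> [[T fT] lT]; have sT : T `<=` (fun y => R y e).
    by move: lT; rewrite /cnfR /= (lex1 _ fT).
  exists (exist _ T (conj fT sT)); apply: proj1_sig_inj; exact: proj1_sig_inj.
Qed.

Lemma order_iso_cnf0 z : (forall y, ~ R y z) -> order_iso (Seg z) (CnfSeg cnf0).
Proof.
move=> hz; pose f (y : initseg R z) : initseg cnfR cnf0 := False_rect _ (hz _ (proj2_sig y)).
have [irrW trW _ _] := wellorder_initseg cnf0 wellorder_cnfR.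
apply: (@order_iso_of_mono _ _ _ _ f) => //.
- by move=> [u hu]; case: (hz _ hu).
- by move=> [u hu]; case: (hz _ hu).
- by move=> [T hT]; case: (lex0 hT).
Qed.

Lemma initseg_cnf1_lt e (X : initseg cnfR (cnf1 e)) z : proj1_sig (proj1_sig X) z -> R z e.
Proof. by case: X => -[X fX] lX /=; move: lX; rewrite /cnfR /= (lex1 _ fX); apply. Qed.

Section MulPow2.
Variable e : K.

Lemma lt_of_nlt_lt c d : ~ R c e -> R d e -> R d c.
Proof.
move=> nc de; case: (tot d c) => [//|[ed|cd]]; first by subst.
by case: nc; apply: tr de.
Qed.

Lemma lex_split (U S : set K) : lex U S -> ~ lex U (fun z => S z /\ ~ R z e) ->
  (forall z, ~ R z e -> (U z <-> S z)) /\
  lex (fun z => U z /\ R z e) (fun z => S z /\ R z e).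
Proof.
move=> [d [Sd [Ud h]]] nl.
case: (pselect (R d e)) => de; last first.
  case: nl; exists d; split => //; split => // z dz; rewrite h //; split.
    by move=> Sz; split => // ze; case: de; apply: tr dz ze.
  by case.
split.
  move=> z nz; apply: h; exact: lt_of_nlt_lt.
exists d; split => //; split; first by case.
move=> z dz; split; case=> Pz ze; split => //; by apply/(h _ dz).
Qed.

Lemma lexU_lo (T X X' : set K) : (forall z, T z -> ~ R z e) -> (forall z, X' z -> R z e) ->
  lex X X' -> lex (T `|` X) (T `|` X').
Proof.
move=> hT hX' [m [X'm [Xm h]]]; exists m; split; first by right.
have me := hX' _ X'm.
split; first by case=> // /hT.
move=> z mz; split; case=> [Tz|/(h _ mz) ?]; by [left|right].
Qed.

Lemma lexU_hi (T0 Sh X : set K) : (forall z, X z -> R z e) ->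
  (exists d, Sh d /\ ~ T0 d /\ ~ R d e /\ forall z, R d z -> (T0 z <-> Sh z)) ->
  lex (T0 `|` X) Sh.
Proof.
move=> hX [d [Shd [T0d [de h]]]]; exists d; split => //; split.
  by case=> // /hX.
move=> z dz; rewrite -h //; split; last by left.
case=> // /hX ze; case: de; apply: tr dz ze.
Qed.

Let Pow := initseg cnfR (cnf1 e).

Let bot : Pow :=
  exist (fun u => cnfR u (cnf1 e)) cnf0 (iffRL (lex1 e (finite_set0 K)) (fun _ => False_ind _)).

Let bot_min (x : Pow) : ~ initsegR x bot.
Proof. exact: lex0. Qed.

Let bot_le (x : Pow) : x = bot \/ initsegR bot x.
Proof.
have [_ _ totP _] := wellorder_initseg (cnf1 e) wellorder_cnfR.
by case: (totP x bot) => [/bot_min[]|[]]; auto.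
Qed.

Definition cnf_hi (S : cnf) : cnf :=
  exist _ (fun z => proj1_sig S z /\ ~ R z e) (sub_finite_set (fun z => @proj1 _ _) (proj2_sig S)).

Lemma cnf_hi_lt (S : cnf) c : proj1_sig S c -> R c e -> cnfR (cnf_hi S) S.
Proof.
move=> Sc ce; have fSlo : finite_set (fun z => proj1_sig S z /\ R z e).
  by apply: sub_finite_set (proj2_sig S) => z [].
have [m0 [[Sm0 m0e] hm0]] := finite_set_max fSlo (ex_intro _ c (conj Sc ce)).
exists m0; split => //; split; first by case.
move=> z m0z; split; first by case.
move=> Sz; split => // ze; case: (hm0 _ (conj Sz ze)) => [zm|zm].
  by subst; case: (irr m0z).
by case: (irr (tr m0z zm)).
Qed.

Section Blocks.
Variables (a' : K) (S : cnf).
Variables (F : Pow * initseg R a' -> initseg cnfR S) (F' : initseg cnfR S -> Pow * initseg R a').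
Hypotheses (FK : cancel F F') (F'K : cancel F' F).
Hypothesis F_mono : forall u v, prodR (CnfSeg (cnf1 e)) (Seg a') u v <-> initsegR (F u) (F v).

Let F_lt u v : prodR (CnfSeg (cnf1 e)) (Seg a') u v -> cnfR (proj1_sig (F u)) (proj1_sig (F v)).
Proof. by move/F_mono. Qed.

Lemma order_iso_block (a3 : initseg R a') :
  order_iso (prodR (CnfSeg (cnf1 e)) (Seg (proj1_sig a3))) (CnfSeg (proj1_sig (F (bot, a3)))).
Proof.
pose up (p : Pow * initseg R (proj1_sig a3)) : Pow * initseg R a' :=
  (p.1, exist (fun t => R t a') (proj1_sig p.2) (tr (proj2_sig p.2) (proj2_sig a3))).
have upl p : initsegR (F (up p)) (F (bot, a3)) by apply/F_mono; left; exact: (proj2_sig p.2).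
pose G p : initseg cnfR (proj1_sig (F (bot, a3))) :=
  exist (fun u => cnfR u (proj1_sig (F (bot, a3)))) _ (upl p).
have [irrT trT _ _] := wellorder_initseg (proj1_sig (F (bot, a3))) wellorder_cnfR.
apply: (order_iso_of_mono (f := G)) => //.
- apply: prodR_tot.
    by case: (wellorder_initseg (cnf1 e) wellorder_cnfR).
  by case: (wellorder_initseg (proj1_sig a3) sR).
- move=> p p' pp'; rewrite /initsegR /G /=; apply/(F_mono (up p) (up p')).
  by case: pp' => [|[e1 h1]]; [left|right; split => //; rewrite /up /= e1].
- move=> [v lv]; have lvS := lex_trans lv (proj2_sig (F (bot, a3))).
  set Vb : initseg cnfR S := exist (fun u => cnfR u S) v lvS.
  have : prodR (CnfSeg (cnf1 e)) (Seg a') (F' Vb) (bot, a3).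
    by apply/(F_mono (F' Vb) (bot, a3)); rewrite F'K; exact: lv.
  case=> [h4|[_ /bot_min []]].
  exists ((F' Vb).1, exist (fun t => R t (proj1_sig a3)) _ h4).
  apply: proj1_sig_inj => /=; rewrite /up /=.
  have -> : ((F' Vb).1, exist (fun t => R t a') (proj1_sig (F' Vb).2)
        (tr h4 (proj2_sig a3))) = F' Vb.
    by case: (F' Vb) h4 => p1 p2 h4 /=; congr pair; apply: proj1_sig_inj.
  by rewrite F'K.
Qed.

Hypothesis IH : forall a3 : initseg R a', forall T : cnf,
  order_iso (prodR (CnfSeg (cnf1 e)) (Seg (proj1_sig a3))) (CnfSeg T) ->
  forall c, proj1_sig T c -> ~ R c e.
Variable c : K.
Hypotheses (Sc : proj1_sig S c) (ce : R c e).

Let hi := F' (exist (fun u => cnfR u S) (cnf_hi S) (cnf_hi_lt Sc ce)).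
Let F_hi : proj1_sig (F hi) = cnf_hi S.
Proof. by rewrite /hi F'K. Qed.
Let block_hi_exponents := IH (order_iso_block hi.2).

(* Otherwise [x' |-> (F^-1 (T0 U x')).1], with [T0] the block start, is strictly increasing
   on [2^e] and sends every [x'], [hi.1] included, below [hi.1]. *)
Lemma block_hi_start : proj1_sig (F (bot, hi.2)) = cnf_hi S.
Proof.
have hiE : hi = (hi.1, hi.2) by exact: surjective_pairing.
case: (bot_le hi.1) => [e1|lb]; first by rewrite -e1 -hiE F_hi.
set T0 := proj1_sig (F (bot, hi.2)).
have l0 : cnfR T0 (cnf_hi S) by rewrite -F_hi; apply: F_lt; rewrite [in X in prodR _ _ _ X]hiE; right.
have [d [Shd [T0d [de hd]]]] : exists d, proj1_sig (cnf_hi S) d /\ ~ proj1_sig T0 d /\ ~ R d e /\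
    forall z, R d z -> (proj1_sig T0 z <-> proj1_sig (cnf_hi S) z).
  by case: l0 => d [Shd [T0d hd]]; exists d; do 3 split => //; case: Shd.
have lhi (x' : Pow) : lex (proj1_sig (cnfU T0 (proj1_sig x'))) (proj1_sig (cnf_hi S)).
  by rewrite /=; apply: lexU_hi; [exact: initseg_cnf1_lt | exists d].
pose p' (x' : Pow) := F' (exist (fun u => cnfR u S) _ (lex_trans (lhi x') (cnf_hi_lt Sc ce))).
have [irrA trA _ _] := wellorder_initseg a' sR.
have hp' x' : (p' x').2 = hi.2 /\ initsegR (p' x').1 hi.1.
  have h1 : prodR (CnfSeg (cnf1 e)) (Seg a') (p' x') hi.
    by apply/F_mono; rewrite /p' F'K /initsegR /= F_hi; apply: lhi.
  have h2 : (bot, hi.2) = p' x' \/ prodR (CnfSeg (cnf1 e)) (Seg a') (bot, hi.2) (p' x').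
    case: (pselect ((bot, hi.2) = p' x')); first by left.
    move=> ne; right; apply/F_mono; rewrite /p' F'K /initsegR /=.
    apply: (lex_proper_sub (proj2_sig (cnfU T0 (proj1_sig x')))); first by move=> z z0; left.
    move=> ee; apply: ne; apply: (can_inj FK); rewrite /p' F'K; apply: proj1_sig_inj => /=.
    exact: proj1_sig_inj.
  case: h1 => [r1|[e2 r2]]; last by split.
  exfalso; case: h2 => [e3|[r3|[e3 _]]].
  - by move: r1; rewrite -e3 /=; apply: irrA.
  - exact: (irrA _ (trA _ _ _ r3 r1)).
  - by move: r1; rewrite -e3; apply: irrA.
have p'_mono u v : initsegR u v -> initsegR (p' u).1 (p' v).1.
  move=> uv; have : prodR (CnfSeg (cnf1 e)) (Seg a') (p' u) (p' v).
    apply/F_mono; rewrite /p' !F'K /initsegR /cnfR /=.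
    by apply: lexU_lo; [exact: block_hi_exponents | exact: initseg_cnf1_lt | exact: uv].
  case: (hp' u) => e1 _; case: (hp' v) => e2 _.
  by case=> [|[_ //]]; rewrite e1 e2 => /irrA.
case: (wellorder_initseg (cnf1 e) wellorder_cnfR) => _ _ _ wfP.
exfalso; apply: (wf_incr_not_below (f := fun x' => (p' x').1) (x := hi.1) wfP p'_mono).
by case: (hp' hi.1).
Qed.

(* In the block of [cnf_hi S], the exponents [< e] of [F (x', hi.2)] increase strictly with
   [x' : 2^e] and stay below the exponents [< e] of [S], themselves an element of [2^e]. *)
Lemma low_exponent_absurd : False.
Proof.
set Slo := fun z => proj1_sig S z /\ R z e.
have fSlo : finite_set Slo by apply: sub_finite_set (proj2_sig S) => z [].
have hU (x' : Pow) :
    (forall z, ~ R z e -> (proj1_sig (proj1_sig (F (x', hi.2))) z <-> proj1_sig S z)) /\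
    lex (fun z => proj1_sig (proj1_sig (F (x', hi.2))) z /\ R z e) Slo.
  apply: lex_split; first exact: (proj2_sig (F (x', hi.2))).
  move=> l3; have l4 : cnfR (proj1_sig (F (x', hi.2))) (cnf_hi S) by [].
  case: (bot_le x') => [e1|lb].
    by move: l4; rewrite e1 block_hi_start; apply: lex_irr.
  have l5 : cnfR (proj1_sig (F (bot, hi.2))) (proj1_sig (F (x', hi.2))) by apply: F_lt; right.
  by move: (lex_trans l5 l4); rewrite block_hi_start; apply: lex_irr.
have lo_fin (x' : Pow) : finite_set (fun z => proj1_sig (proj1_sig (F (x', hi.2))) z /\ R z e).
  by apply: sub_finite_set (proj2_sig (proj1_sig (F (x', hi.2)))) => z [].
have lo_lt (x' : Pow) : cnfR (exist _ _ (lo_fin x')) (cnf1 e).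
  by rewrite /cnfR /= (lex1 e (lo_fin x')) => z [].
pose g (x' : Pow) : Pow := exist (fun u => cnfR u (cnf1 e)) _ (lo_lt x').
have g_mono u v : initsegR u v -> initsegR (g u) (g v).
  move=> uv; rewrite /initsegR /g /cnfR /=.
  have : cnfR (proj1_sig (F (u, hi.2))) (proj1_sig (F (v, hi.2))) by apply: F_lt; right.
  case=> d [Vd [Ud hd]].
  have de : R d e.
    apply: contrapT => nd; apply: Ud; apply/((hU u).1 _ nd); apply/((hU v).1 _ nd).
    exact: Vd.
  exists d; split => //; split; first by case.
  by move=> z dz; split; case=> Pz ze; split => //; apply/(hd _ dz).
have lSlo : cnfR (exist _ Slo fSlo) (cnf1 e) by rewrite /cnfR /= (lex1 e fSlo) => z [].
case: (wellorder_initseg (cnf1 e) wellorder_cnfR) => _ _ _ wfP.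
apply: (wf_incr_not_below (x := exist (fun u => cnfR u (cnf1 e)) _ lSlo) wfP g_mono).
exact: (hU _).2.
Qed.

End Blocks.

Lemma mul_pow2_exponents_ge a' (S : cnf) :
  order_iso (prodR (CnfSeg (cnf1 e)) (Seg a')) (CnfSeg S) -> forall c, proj1_sig S c -> ~ R c e.
Proof.
elim/(well_founded_ind wfR): a' S => a' IH S [F [[F' FK F'K] hF]] c Sc ce.
apply: (low_exponent_absurd FK F'K hF _ Sc ce) => a3 T.
exact: IH (proj2_sig a3) T.
Qed.
End MulPow2.

Section Shift.
Variables (eta e : K).
Hypothesis hee : oadd R eta eta e.

Lemma shift_data_ex : exists fg : (initseg R e -> initseg R eta + initseg R eta) *
                                  (initseg R eta + initseg R eta -> initseg R e),
  [/\ cancel fg.1 fg.2, cancel fg.2 fg.1 &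
      forall u v, Seg e u v <-> sumR (Seg eta) (Seg eta) (fg.1 u) (fg.1 v)].
Proof. by case: hee => f [[g fK gK] hf]; exists (f, g). Qed.

Definition shift_data := proj1_sig (cid shift_data_ex).
Let f := shift_data.1.
Let f' := shift_data.2.
Let fK : cancel f f'. Proof. by rewrite /f /f' /shift_data; case: cid => -[? ?] []. Qed.
Let f'K : cancel f' f. Proof. by rewrite /f /f' /shift_data; case: cid => -[? ?] []. Qed.
Let hf : forall u v, Seg e u v <-> sumR (Seg eta) (Seg eta) (f u) (f v).
Proof. by rewrite /f /shift_data; case: cid => -[? ?] []. Qed.

(* [shift k] is [eta + k] for [k < eta], read off the isomorphism [e = eta + eta]. *)
Definition shift (k : K) : K :=
  match pselect (R k eta) with left h => proj1_sig (f' (inr (exist _ k h))) | right _ => k end.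
Definition unshift (c : K) : K :=
  match pselect (R c e) with
  | left h => match f (exist _ c h) with inl k => proj1_sig k | inr k => proj1_sig k end
  | right _ => c end.

Let hf' : forall u v, sumR (Seg eta) (Seg eta) u v -> R (proj1_sig (f' u)) (proj1_sig (f' v)).
Proof. by move=> u v h; apply/hf; rewrite !f'K. Qed.

Lemma shift_data_inl (k : initseg R eta) : proj1_sig (f' (inl k)) = proj1_sig k.
Proof.
case: k => k hk /=; elim/(well_founded_ind wfR): k hk => k IH hk.
set ik := proj1_sig (f' (inl (exist (fun t => R t eta) k hk))).
have down : forall y, R y ik ->
    exists k' (hk' : R k' eta), proj1_sig (f' (inl (exist (fun t => R t eta) k' hk'))) = y.
  move=> y yik; have ye : R y e := tr yik (proj2_sig (f' _)).
  have : sumR (Seg eta) (Seg eta) (f (exist (fun t => R t e) y ye)) (inl (exist (fun t => R t eta) k hk)).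
    by rewrite -[inl _]f'K; apply/hf.
  case E: (f (exist (fun t => R t e) y ye)) => [k'|k'] //= _.
  exists (proj1_sig k'), (proj2_sig k').
  have -> : exist (fun t => R t eta) (proj1_sig k') (proj2_sig k') = k' by case: (k').
  by rewrite -E fK.
have eqR : forall y, R y k <-> R y ik.
  move=> y; split => yr.
    have yeta := tr yr hk.
    rewrite -(IH _ yr yeta).
    exact: (@hf' (inl (exist (fun t => R t eta) y yeta)) (inl (exist (fun t => R t eta) k hk)) yr).
  have [k' [hk' e']] := down _ yr.
  have kk : R k' k.
    case: (tot k' k) => [//|[e1|r1]].
      exfalso; move: yr; rewrite -e'; move: hk' {e'}; rewrite e1 => hk'.
      by rewrite (Prop_irrelevance hk' hk) => /irr.
    have := @hf' (inl (exist (fun t => R t eta) k hk)) (inl (exist (fun t => R t eta) k' hk')) r1.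
    by rewrite e' => /(tr yr) /irr.
  by rewrite -e' IH.
case: (tot k ik) => [/eqR /irr //|[//|ikk]].
by move: (ikk) => /eqR /irr.
Qed.

Lemma shiftE k (h : R k eta) : shift k = proj1_sig (f' (inr (exist (fun t => R t eta) k h))).
Proof. by rewrite /shift; case: pselect => // h'; rewrite (Prop_irrelevance h' h). Qed.

Lemma lt_eta_lt_e k : R k eta -> R k e.
Proof.
by move=> h; have := shift_data_inl (exist (fun t => R t eta) k h) => /= <-; exact: (proj2_sig (f' _)).
Qed.

Lemma shift_lt_e k : R k eta -> R (shift k) e.
Proof. by move=> h; rewrite (shiftE h); exact: (proj2_sig (f' _)). Qed.

Lemma shift_nlt_eta k : R k eta -> ~ R (shift k) eta.
Proof.
move=> h; rewrite (shiftE h) => h2.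
have := shift_data_inl (exist (fun t => R t eta) _ h2) => /= e1.
have : f' (inr (exist (fun t => R t eta) k h)) = f' (inl (exist (fun t => R t eta) _ h2)).
  by apply: proj1_sig_inj; rewrite e1.
by move/(f_equal f); rewrite !f'K.
Qed.

Lemma shift_lt k k' : R k eta -> R k' eta -> R k k' -> R (shift k) (shift k').
Proof.
move=> h h' kk; rewrite (shiftE h) (shiftE h').
exact: (@hf' (inr (exist (fun t => R t eta) k h)) (inr (exist (fun t => R t eta) k' h')) kk).
Qed.

Lemma shift_lt_reflect k k' : R k eta -> R k' eta -> R (shift k) (shift k') -> R k k'.
Proof.
move=> h h' s1; case: (tot k k') => [//|[e1|r1]]; first by subst; case: (irr s1).
by case: (irr (tr s1 (shift_lt h' h r1))).
Qed.

Lemma shift_inj k k' : R k eta -> R k' eta -> shift k = shift k' -> k = k'.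
Proof.
move=> h h' s1; case: (tot k k') => [r1|[//|r1]].
  by have := shift_lt h h' r1; rewrite s1 => /irr.
by have := shift_lt h' h r1; rewrite s1 => /irr.
Qed.

Lemma unshiftK k : R k eta -> unshift (shift k) = k.
Proof.
move=> h; rewrite /unshift; case: pselect => [h1|nh]; last by case: nh; apply: shift_lt_e.
have -> : exist (fun t => R t e) (shift k) h1 = f' (inr (exist (fun t => R t eta) k h)).
  by apply: proj1_sig_inj; rewrite /= (shiftE h).
by rewrite f'K.
Qed.

Lemma shift_unshift c : ~ R c eta -> R c e -> R (unshift c) eta /\ shift (unshift c) = c.
Proof.
move=> nc ce; rewrite /unshift; case: pselect => [h|//].
case E: (f (exist (fun t => R t e) c h)) => [k|k].
  have e1 : f' (inl k) = exist (fun t => R t e) c h by rewrite -E fK.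
  have := shift_data_inl k; rewrite e1 /= => e2; case: nc; rewrite e2; exact: (proj2_sig k).
split; first exact: (proj2_sig k).
have e1 : f' (inr k) = exist (fun t => R t e) c h by rewrite -E fK.
rewrite (shiftE (proj2_sig k)).
have -> : exist (fun t => R t eta) (proj1_sig k) (proj2_sig k) = k by case: (k).
by rewrite e1.
Qed.

Definition cnf_shift (T : cnf) : cnf := exist _ (shift @` proj1_sig T) (finite_image shift (proj2_sig T)).

Lemma lt_shift a k : R a eta -> R k eta -> R a (shift k).
Proof.
move=> ha hk; have := shift_nlt_eta hk; case: (tot a (shift k)) => [//|[<- //|r1 n]].
by case: n; apply: tr r1 ha.
Qed.

Lemma lex_shift (A A' B B' : set K) : (forall z, A z -> R z eta) -> (forall z, A' z -> R z eta) ->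
  (forall z, B z -> R z eta) -> (forall z, B' z -> R z eta) -> lex B B' ->
  lex (A `|` shift @` B) (A' `|` shift @` B').
Proof.
move=> hA hA' hB hB' [m [B'm [Bm h]]].
have meta := hB' _ B'm.
exists (shift m); split; first by right; exists m.
split.
  case=> [/hA /(shift_nlt_eta meta) //|[k Bk ek]].
  by have := shift_inj (hB _ Bk) meta ek => km; subst k.
move=> z mz.
have nA : forall X : set K, (forall z, X z -> R z eta) -> ~ X z.
  move=> X hX /hX ze; have := shift_nlt_eta meta; apply; exact: tr mz ze.
split.
  case=> [Az|[k Bk ek]]; first by case: (nA _ hA Az).
  subst z; by right; exists k => //; apply: (h k (shift_lt_reflect meta (hB _ Bk) mz)).1.
case=> [Az|[k Bk ek]]; first by case: (nA _ hA' Az).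
subst z.
by right; exists k => //; apply: (h k (shift_lt_reflect meta (hB' _ Bk) mz)).2.
Qed.

Lemma lex_shift_low (A A' B : set K) : (forall z, B z -> R z eta) -> (forall z, A' z -> R z eta) ->
  lex A A' -> lex (A `|` shift @` B) (A' `|` shift @` B).
Proof.
move=> hB hA' [m [A'm [Am h]]]; have meta := hA' _ A'm.
exists m; split; first by left.
split; first by case=> // -[k Bk ek]; have := shift_nlt_eta (hB _ Bk); rewrite ek.
move=> z mz; split; case=> [/(h _ mz) ?|?]; by [left|right].
Qed.

Lemma shift_setU_inj (A A' B B' : set K) : (forall z, A z -> R z eta) -> (forall z, A' z -> R z eta) ->
  (forall z, B z -> R z eta) -> (forall z, B' z -> R z eta) ->
  shift @` B `|` A = shift @` B' `|` A' -> A = A' /\ B = B'.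
Proof.
have side : forall (X X' Y Y' : set K), (forall z, X z -> R z eta) -> (forall z, X' z -> R z eta) ->
    (forall z, Y z -> R z eta) -> (forall z, Y' z -> R z eta) ->
    shift @` Y `|` X = shift @` Y' `|` X' -> X `<=` X' /\ Y `<=` Y'.
  move=> X X' Y Y' hX hX' hY hY' e1; split.
    move=> z Xz; have : (shift @` Y' `|` X') z by rewrite -e1; right.
    case=> // -[k Yk ek]; have := shift_nlt_eta (hY' _ Yk); rewrite ek => /(_ (hX _ Xz)) [].
  move=> k Yk; have : (shift @` Y' `|` X') (shift k) by rewrite -e1; left; exists k.
  case=> [[k' Y'k' ek]|X'k]; last by case: (shift_nlt_eta (hY _ Yk) (hX' _ X'k)).
  by rewrite -(shift_inj (hY' _ Y'k') (hY _ Yk) ek).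
move=> hA hA' hB hB' e1.
have [s1 s2] := side _ _ _ _ hA hA' hB hB' e1.
have [s3 s4] := side _ _ _ _ hA' hA hB' hB (esym e1).
by split; apply/seteqP; split.
Qed.

Section ProductWithPow.
Variable T : cnf.
Hypothesis T_lt_eta : forall t, proj1_sig T t -> R t eta.

Let below_T_lt_eta (Y : initseg cnfR T) z : proj1_sig (proj1_sig Y) z -> R z eta.
Proof. by move=> Yz; exact: (lex_ub (proj2_sig Y) T_lt_eta Yz). Qed.

Let prod_to_cnf_lt (X : initseg cnfR (cnf1 eta)) (Y : initseg cnfR T) :
  cnfR (cnfU (proj1_sig X) (cnf_shift (proj1_sig Y))) (cnf_shift T).
Proof.
rewrite /cnfR /= -[shift @` proj1_sig T]set0U.
by apply: lex_shift => //; [exact: initseg_cnf1_lt|exact: below_T_lt_eta|exact: (proj2_sig Y)].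
Qed.

Let prod_to_cnf (p : initseg cnfR (cnf1 eta) * initseg cnfR T) : initseg cnfR (cnf_shift T) :=
  exist (fun u => cnfR u (cnf_shift T)) _ (prod_to_cnf_lt p.1 p.2).

(* [V] splits into its exponents below [eta] and the shifted image of those above. *)
Let prod_to_cnf_surj (V : initseg cnfR (cnf_shift T)) : exists p, prod_to_cnf p = V.
Proof.
case: V => V lV.
have Ve z : proj1_sig V z -> R z e.
  by apply: (lex_ub lV) => g [k Tk <-]; exact: shift_lt_e (T_lt_eta Tk).
set A := fun z => proj1_sig V z /\ R z eta.
set B := unshift @` (fun z => proj1_sig V z /\ ~ R z eta).
have fA : finite_set A by apply: sub_finite_set (proj2_sig V) => z [].
have fB : finite_set B by apply: finite_image; apply: sub_finite_set (proj2_sig V) => z [].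
have lA : cnfR (exist _ A fA) (cnf1 eta) by rewrite /cnfR /= (lex1 eta fA) => z [].
have [m [[k0 Tk0 ek0] [Vm hm]]] := lV.
have k0eta := T_lt_eta Tk0.
have lB : cnfR (exist _ B fB) T.
  exists k0; split => //; split.
    move=> [c [Vc nc] ec]; apply: Vm; rewrite -ek0 -ec.
    by case: (shift_unshift nc (Ve _ Vc)) => _ ->.
  move=> z k0z; split.
    move=> [c [Vc nc] ec]; have [hz1 hz2] := shift_unshift nc (Ve _ Vc); rewrite ec in hz1 hz2.
    have : (shift @` proj1_sig T) c.
      by apply/(hm c) => //; rewrite -ek0 -hz2; exact: shift_lt k0eta hz1 k0z.
    by case=> k Tk ek; rewrite -(shift_inj (T_lt_eta Tk) hz1) // ek hz2.
  move=> Tz; have zeta := T_lt_eta Tz.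
  have Vz : proj1_sig V (shift z).
    apply/(hm (shift z)); first by rewrite -ek0; exact: shift_lt k0eta zeta k0z.
    by exists z.
  by exists (shift z); [split => //; exact: shift_nlt_eta|exact: unshiftK].
exists (exist (fun u => cnfR u (cnf1 eta)) _ lA, exist (fun u => cnfR u T) _ lB).
apply: proj1_sig_inj; apply: proj1_sig_inj => /=.
apply/seteqP; split.
  move=> z [[Vz ze]//|[k [c [Vc nc] <-] <-]].
  by case: (shift_unshift nc (Ve _ Vc)) => _ ->.
move=> z Vz; case: (pselect (R z eta)) => ze; first by left.
right; exists (unshift z); first by exists z.
by case: (shift_unshift ze (Ve _ Vz)).
Qed.

Lemma order_iso_prodR_cnf_shift :
  order_iso (prodR (CnfSeg (cnf1 eta)) (CnfSeg T)) (CnfSeg (cnf_shift T)).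
Proof.
have [_ _ totP _] := wellorder_initseg (cnf1 eta) wellorder_cnfR.
have [_ _ totT _] := wellorder_initseg T wellorder_cnfR.
have [irrTs trTs _ _] := wellorder_initseg (cnf_shift T) wellorder_cnfR.
apply: (order_iso_of_mono (prodR_tot totP totT) irrTs trTs _ prod_to_cnf_surj).
move=> [X Y] [X' Y'] /=; rewrite /prodR /initsegR /cnfR /prod_to_cnf /= => -[lY|[eY lX]].
  by apply: lex_shift => //; do ?[exact: initseg_cnf1_lt]; exact: below_T_lt_eta.
by rewrite eY; apply: lex_shift_low => //; [exact: below_T_lt_eta|exact: initseg_cnf1_lt].
Qed.

End ProductWithPow.

End Shift.

Section Cardinal.
Hypothesis hcard : forall c, ~ exists f : K -> seg R c, injective f.

Lemma cnf_iso_ex z : exists S : cnf, order_iso (Seg z) (CnfSeg S).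
Proof.
elim/(well_founded_ind wfR): z => z IH.
have U1 : forall y (S S' : cnf), order_iso (Seg y) (CnfSeg S) -> order_iso (Seg y) (CnfSeg S') -> S = S'.
  move=> y S S' h h'; apply: (initseg_iso_inj wellorder_cnfR); exact: order_iso_trans (order_iso_sym h) h'.
pose g (y : initseg R z) : cnf := proj1_sig (cid (IH _ (proj2_sig y))).
have gP : forall y, order_iso (Seg (proj1_sig y)) (CnfSeg (g y)).
  by move=> y; rewrite /g; case: cid.
have mono : forall y y', initsegR y y' -> cnfR (g y) (g y').
  move=> y y' yy'; have [w [lw hw]] := order_iso_initseg sR wellorder_cnfR (gP y') yy'.
  by rewrite (U1 _ _ _ (gP y) hw).
have down : forall y' (T : cnf), cnfR T (g y') -> exists y, g y = T.
  move=> y' T lT; have [w [lw hw]] := order_iso_initseg wellorder_cnfR sR (order_iso_sym (gP y')) lT.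
  have wz : R w z := tr lw (proj2_sig y').
  exists (exist (fun t => R t z) w wz).
  exact: (U1 w _ _ (gP (exist (fun t => R t z) w wz)) (order_iso_sym hw)).
(* If [g] hit every [cnf1 k], [K] would inject into [Seg z]: [K] is a cardinal. *)
have notall : exists T : cnf, forall y, g y <> T.
  apply: contrapT => hall.
  have hy : forall k : K, exists y, g y = cnf1 k.
    move=> k; apply: contrapT => nk; apply: hall; exists (cnf1 k) => y gy; apply: nk; by exists y.
  apply: (@hcard z); exists (fun k => proj1_sig (cid (hy k))).
  move=> k k' e; have := f_equal g e; case: cid => y1 /= ->; case: cid => y2 /= ->.
  move/(f_equal (@proj1_sig _ _)) => /= e1.
  by have : [set k] k by []; rewrite e1.
have [S [hS minS]] := wf_minimal (cnfR_wf ) notall.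
have glt : forall y, cnfR (g y) S.
  move=> y; case: (lex_tot (proj2_sig (g y)) (proj2_sig S)) => [//|[e|lSg]].
    by case: (hS y); apply: proj1_sig_inj.
  by have [y2 e2] := down _ _ lSg; case: (hS y2).
pose F (y : initseg R z) : initseg cnfR S := exist (fun u => cnfR u S) (g y) (glt y).
exists S; apply: (@order_iso_of_mono _ _ _ _ F).
- by case: (wellorder_initseg z sR).
- by case: (wellorder_initseg S wellorder_cnfR).
- by case: (wellorder_initseg S wellorder_cnfR).
- by move=> y y' /mono.
- move=> [T lT]; have : exists y, g y = T.
    by apply: contrapT => nT; apply: (minS _ lT) => y gy; apply: nT; exists y.
  by case=> y gy; exists y; apply: proj1_sig_inj.
Qed.

Lemma cnf_iso_uniq z (S S' : cnf) : order_iso (Seg z) (CnfSeg S) -> order_iso (Seg z) (CnfSeg S') -> S = S'.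
Proof.
move=> h h'; apply: (initseg_iso_inj wellorder_cnfR).
exact: order_iso_trans (order_iso_sym h) h'.
Qed.

Lemma cnf_iso_down z (S T : cnf) : order_iso (Seg z) (CnfSeg S) -> cnfR T S ->
  exists y, R y z /\ order_iso (Seg y) (CnfSeg T).
Proof.
move=> h lT; have [w [lw hw]] := order_iso_initseg wellorder_cnfR sR (order_iso_sym h) lT.
by exists w; split => //; apply: order_iso_sym.
Qed.

Lemma cnf_iso_restr z (S : cnf) y : order_iso (Seg z) (CnfSeg S) -> R y z ->
  exists T, cnfR T S /\ order_iso (Seg y) (CnfSeg T).
Proof. by move=> h yz; have [w [lw hw]] := order_iso_initseg sR wellorder_cnfR h yz; exists w. Qed.

Lemma cnf_of_onf s z : onf R s z -> exists S : cnf, proj1_sig S = [set` s] /\ order_iso (Seg z) (CnfSeg S).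
Proof.
elim: s z => [|e s IH] z /=.
  move=> hz; exists cnf0; split; first by apply/seteqP; split => x //=.
  exact: order_iso_cnf0.
move=> [q [r [hq [hr [hqrz hs]]]]].
have [S' [eS' hS']] := IH _ hr.
have hq' : order_iso (Seg q) (CnfSeg (cnf1 e)) := order_iso_trans hq (order_iso_fin_sub e).
have h1 : order_iso (Seg z) (sumR (CnfSeg (cnf1 e)) (CnfSeg S')).
  exact: order_iso_trans hqrz (order_iso_sumR hq' hS').
exists (cnfU (cnf1 e) S'); split.
  rewrite /cnfU /= eS'; apply/seteqP; split => x /=; rewrite inE.
    by case=> [->|xs]; rewrite ?eqxx // xs orbT.
  by case/orP=> [/eqP->|xs]; [left|right].
apply: order_iso_trans h1 (order_iso_sumR_cnfU _ _) => //.
by move=> g s0; rewrite eS' /= => gs ->; apply: hs.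
Qed.

Lemma cnf_iso_cnf1 z (S : cnf) e : order_iso (Seg z) (CnfSeg S) -> proj1_sig S e ->
  exists q, order_iso (Seg q) (CnfSeg (cnf1 e)).
Proof.
move=> hz Se; case: (pselect (cnf1 e = S)) => [->|neS]; first by exists z.
have /(cnf_iso_down hz) [q [_ hq]] : cnfR (cnf1 e) S.
  by apply: lex_proper_sub (proj2_sig S) _ _ => [x /= ->//|e1]; apply: neS; exact: proj1_sig_inj.
by exists q.
Qed.

Lemma onf_of_cnf z (S : cnf) :
  order_iso (Seg z) (CnfSeg S) -> exists s, onf R s z /\ [set` s] = proj1_sig S.
Proof.
elim/(well_founded_ind wfR): z S => z IH S hz.
case: (pselect (proj1_sig S !=set0)) => [S0|S0]; last first.
  exists [::]; split; last by apply/seteqP; split => x //= Sx; case: S0; exists x.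
  move=> y yz; case: hz => f _; case: (f (exist _ y yz)) => T [m [Sm _]].
  by case: S0; exists m.
have [e [Se he]] := finite_set_max (proj2_sig S) S0.
set S' := cnfD1 S e.
have S'_lt_e g s : proj1_sig S' g -> proj1_sig (cnf1 e) s -> R g s.
  by move=> [Sg ng] ->; case: (he _ Sg).
have eSU : proj1_sig S = proj1_sig (cnf1 e) `|` proj1_sig S' by rewrite setUC; exact: cnfD1K.
have lS'S : cnfR S' S.
  apply: (lex_proper_sub (proj2_sig S)); first by move=> x [].
  move=> e1; have : proj1_sig S' e by rewrite e1.
  by case=> _; apply.
have [r [rz hr]] := cnf_iso_down hz lS'S.
have [s' [hs' es']] := IH r rz S' hr.
have [q hq] := cnf_iso_cnf1 hz Se.
exists (e :: s'); split.
  exists q, r; split; first exact: order_iso_trans hq (order_iso_sym (order_iso_fin_sub e)).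
  split; first exact: hs'.
  split; last by move=> e' e's; have : [set` s'] e' by []; rewrite es' => -[/he[]].
  apply: order_iso_trans hz (order_iso_trans (order_iso_sym (order_iso_sumR_cnfU S'_lt_e eSU)) _).
  exact: order_iso_sumR (order_iso_sym hq) (order_iso_sym hr).
rewrite eSU -es'; apply/seteqP; split => x /=; rewrite inE.
  by case/orP=> [/eqP->|xs]; [left|right].
by case=> [->|xs]; rewrite ?eqxx ?xs ?orbT.
Qed.

Lemma L_of_order_iso z (S : cnf) : order_iso (Seg z) (CnfSeg S) -> L R z = proj1_sig S.
Proof.
move=> hz; apply/seteqP; split.
  move=> e [s [hs es]]; have [S'' [eS'' h'']] := cnf_of_onf hs.
  by rewrite -(cnf_iso_uniq h'' hz) eS''.
move=> e Se.
have [s [hs es]] := onf_of_cnf hz.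
by exists s; split => //; have : [set` s] e by rewrite es.
Qed.

Definition Lcnf z : cnf := proj1_sig (cid (cnf_iso_ex z)).
Lemma Lcnf_iso z : order_iso (Seg z) (CnfSeg (Lcnf z)).
Proof. by rewrite /Lcnf; case: cid. Qed.
Lemma Lcnf_L z : proj1_sig (Lcnf z) = L R z.
Proof. by rewrite (L_of_order_iso (Lcnf_iso z)). Qed.
Lemma finite_L z : finite_set (L R z).
Proof. rewrite -Lcnf_L; exact: proj2_sig. Qed.
Lemma Lcnf_inj z z' : Lcnf z = Lcnf z' -> z = z'.
Proof.
move=> e; apply: (initseg_iso_inj sR); apply: order_iso_trans (Lcnf_iso z) _.
by rewrite e; apply: order_iso_sym; apply: Lcnf_iso.
Qed.
Lemma L_inj z z' : L R z = L R z' -> z = z'.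
Proof. by rewrite -!Lcnf_L => e; apply: Lcnf_inj; apply: proj1_sig_inj. Qed.

Lemma finite_formal_subsets z : finite_set [set b | L R b `<=` L R z].
Proof.
apply: (finite_preimage (B := [set S | S `<=` L R z])).
  by move=> b b' _ _; apply: L_inj.
exact: finite_set_subsets (finite_L z).
Qed.

Lemma order_iso_opow2 d p : opow2 R d p -> order_iso (Seg p) (CnfSeg (cnf1 d)).
Proof. by move=> h; apply: order_iso_trans h (order_iso_fin_sub d). Qed.

Lemma opow2_uniq d p p' : opow2 R d p -> opow2 R d p' -> p = p'.
Proof.
move=> h h'; apply: (initseg_iso_inj sR).
exact: order_iso_trans (order_iso_opow2 h) (order_iso_sym (order_iso_opow2 h')).
Qed.

Lemma L_lt_opow2 d p b : opow2 R d p -> R b p -> forall k, L R b k -> R k d.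
Proof.
move=> hp bp k; have [T [lT hT]] := cnf_iso_restr (order_iso_opow2 hp) bp.
rewrite (L_of_order_iso hT) => Tk.
by move: lT; rewrite /cnfR (lex1 d (proj2_sig T)) => /(_ _ Tk).
Qed.

Lemma Lcnf_lt_opow2 d p b : opow2 R d p -> R b p -> forall k, proj1_sig (Lcnf b) k -> R k d.
Proof. by move=> hp bp k; rewrite Lcnf_L; exact: L_lt_opow2 hp bp k. Qed.

Lemma L_sub_ex alpha (T : cnf) : proj1_sig T `<=` L R alpha -> exists z, L R z = proj1_sig T.
Proof.
move=> hT; case: (pselect (proj1_sig T = L R alpha)) => eT.
  by exists alpha.
have : cnfR T (Lcnf alpha).
  apply: (lex_proper_sub (proj2_sig _)); rewrite Lcnf_L //.
move/(cnf_iso_down (Lcnf_iso alpha)) => [z [_ hz]].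
by exists z; apply: (L_of_order_iso hz).
Qed.

Section DoubleSum.
Local Open Scope ring_scope.

Variables (eta : K) (x : K -> K -> int) (y : K -> int).
Hypothesis x_supp : forall p, opow2 R eta p -> forall b g, ~ R b p \/ ~ R g p -> x b g = 0.
Hypothesis y_decomp : forall a b g, decomp R eta a b g -> y a = x b g.
Hypothesis y_nodecomp : forall a, ~ (exists b g, decomp R eta a b g) -> y a = 0.

Section Decomposition.
Variables (e p : K).
Hypotheses (hee : oadd R eta eta e) (hp : opow2 R eta p).

Notation shift_eta := (shift hee).

Lemma order_iso_mul_pow2_eta b : R b p -> order_iso (Seg b) (CnfSeg (Lcnf b)) ->
  order_iso (prodR (Seg p) (Seg b)) (CnfSeg (cnf_shift hee (Lcnf b))).
Proof.
move=> bp hb; apply: order_iso_trans (order_iso_prodR (order_iso_opow2 hp) hb) _.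
apply: (order_iso_prodR_cnf_shift hee).
exact: (Lcnf_lt_opow2 hp bp).
Qed.

Lemma shift_above (b g : K) : R b p -> R g p ->
  forall g0 s0, proj1_sig (Lcnf g) g0 -> proj1_sig (cnf_shift hee (Lcnf b)) s0 -> R g0 s0.
Proof.
move=> bp gp g0 s0 g0L [k kL <-]; apply: (lt_shift hee).
  exact: (Lcnf_lt_opow2 hp gp g0L).
exact: (Lcnf_lt_opow2 hp bp kL).
Qed.

Lemma L_decomp a b g : decomp R eta a b g ->
  [/\ R b p, R g p & L R a = shift_eta @` L R b `|` L R g].
Proof.
move=> [p' [m [hp' bp' gp' hm hma]]].
have ep := opow2_uniq hp' hp; subst p'.
split => //.
have isom : order_iso (Seg m) (CnfSeg (cnf_shift hee (Lcnf b))).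
  exact: order_iso_trans hm (order_iso_mul_pow2_eta bp' (Lcnf_iso b)).
have isoa : order_iso (Seg a) (CnfSeg (cnfU (cnf_shift hee (Lcnf b)) (Lcnf g))).
  apply: order_iso_trans hma _; apply: order_iso_trans (order_iso_sumR isom (Lcnf_iso g)) _.
  exact: (@order_iso_sumR_cnfU _ _ (cnfU _ _) (shift_above bp' gp') erefl).
by rewrite (L_of_order_iso isoa) /= !Lcnf_L.
Qed.

Section DsetElement.
(* [alpha = 2^(eta*2) a' + 2^eta xi + xi], with [e = eta*2], [p = 2^eta], [qq = 2^e],
   [r = qq a'], [s = p xi] and [t = r + s]. *)
Variables (alpha xi a' qq r s t : K).
Hypotheses (hq : opow2 R e qq) (xip : R xi p).
Hypotheses (hr : omul R qq a' r) (hs : omul R p xi s) (ht : oadd R r s t) (ha : oadd R t xi alpha).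

Let shift_eta_nlt k : R k eta -> ~ R (shift_eta k) eta := @shift_nlt_eta eta e hee k.

Lemma L_Dset : L R alpha = (L R r `|` shift_eta @` L R xi) `|` L R xi /\ forall c, L R r c -> ~ R c e.
Proof.
have hre : forall c, proj1_sig (Lcnf r) c -> ~ R c e.
  apply: (mul_pow2_exponents_ge (a' := a')).
  apply: order_iso_trans (order_iso_sym (order_iso_prodR (order_iso_opow2 hq) (order_iso_refl _))) _.
  exact: order_iso_trans (order_iso_sym hr) (Lcnf_iso r).
have isos : order_iso (Seg s) (CnfSeg (cnf_shift hee (Lcnf xi))).
  exact: order_iso_trans hs (order_iso_mul_pow2_eta xip (Lcnf_iso xi)).
have isot : order_iso (Seg t) (CnfSeg (cnfU (Lcnf r) (cnf_shift hee (Lcnf xi)))).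
  apply: order_iso_trans ht _; apply: order_iso_trans (order_iso_sumR (Lcnf_iso r) isos) _.
  apply: (@order_iso_sumR_cnfU _ _ (cnfU _ _) _ erefl) => g0 s0 [k kL <-] rs0.
  apply: (lt_of_nlt_lt (hre _ rs0)); exact: (shift_lt_e hee (Lcnf_lt_opow2 hp xip kL)).
have isoal : order_iso (Seg alpha)
    (CnfSeg (cnfU (cnfU (Lcnf r) (cnf_shift hee (Lcnf xi))) (Lcnf xi))).
  apply: order_iso_trans ha _; apply: order_iso_trans (order_iso_sumR isot (Lcnf_iso xi)) _.
  apply: (@order_iso_sumR_cnfU _ _ (cnfU _ _) _ erefl) => g0 s0 xg0 [rs0|[k kL <-]].
    apply: (lt_of_nlt_lt (hre _ rs0)); apply: (lt_eta_lt_e hee); exact: (Lcnf_lt_opow2 hp xip xg0).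
  apply: (lt_shift hee); [exact: (Lcnf_lt_opow2 hp xip xg0) | exact: (Lcnf_lt_opow2 hp xip kL)].
split; first by rewrite (L_of_order_iso isoal) /= !Lcnf_L.
by move=> c; rewrite -Lcnf_L; apply: hre.
Qed.

Lemma L_xi_sub : L R xi `<=` L R alpha.
Proof. by case: L_Dset => -> _ z xz; right. Qed.

Lemma L_lt_eta_xi k : R k eta -> L R alpha k -> L R xi k.
Proof.
move=> ke; case: L_Dset => -> hre [[/hre|[k' k'L ek]]|//].
  by case; apply: (lt_eta_lt_e hee).
exfalso; move: ke; rewrite -ek; exact: (shift_nlt_eta (L_lt_opow2 hp xip k'L)).
Qed.

Lemma decomp_ex b g : R b p -> R g p -> L R b `<=` L R xi -> L R g `<=` L R xi ->
  exists a, decomp R eta a b g /\ L R a `<=` L R alpha.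
Proof.
move=> bp gp bxi gxi.
set M := cnf_shift hee (Lcnf b).
set Tt := cnfU M (Lcnf g).
have hM : proj1_sig M `<=` L R alpha.
  move=> z [k kL <-]; case: L_Dset => -> _; left; right; exists k => //.
  by apply: bxi; rewrite -Lcnf_L.
have hTt : proj1_sig Tt `<=` L R alpha.
  move=> z [/hM //|]; rewrite Lcnf_L => /gxi; exact: L_xi_sub.
have [a La] := L_sub_ex hTt.
have [m Lm] := L_sub_ex hM.
have eM : M = Lcnf m by apply: proj1_sig_inj; rewrite Lcnf_L Lm.
have eT : Tt = Lcnf a by apply: proj1_sig_inj; rewrite Lcnf_L La.
exists a; split; last by rewrite La.
exists p, m; split => //.
  apply: order_iso_trans (Lcnf_iso m) _; rewrite -eM.
  exact: order_iso_sym (order_iso_mul_pow2_eta bp (Lcnf_iso b)).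
apply: order_iso_trans (Lcnf_iso a) _; rewrite -eT.
apply: order_iso_trans (order_iso_sym (@order_iso_sumR_cnfU _ _ Tt (shift_above bp gp) erefl)) _.
apply: order_iso_sumR; last exact: order_iso_sym (Lcnf_iso g).
have hm := order_iso_sym (Lcnf_iso m); rewrite -eM in hm; exact: hm.
Qed.


Let F := [set b | L R b `<=` L R alpha].
Let F2 := fset_set (F `*` F).

Let in_F a : a \in fset_set F <-> F a.
Proof. by rewrite in_fset_set ?inE //; exact: finite_formal_subsets. Qed.

Let in_F2 q : q \in F2 <-> F q.1 /\ F q.2.
Proof. by rewrite in_fset_set ?inE //; apply: finite_setX; exact: finite_formal_subsets. Qed.

Let sum_over_F2 (P : K * K -> Prop) q0 : F q0.1 -> F q0.2 -> (forall q, P q <-> q = q0) ->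
  \sum_(q <- F2) (if `[< P q >] then x q.1 q.2 else 0) = x q0.1 q0.2.
Proof. by move=> F1 F2' hP; apply: big_if_single hP; [exact: fset_uniq|exact/in_F2]. Qed.

Lemma y_as_sum a : F a ->
  y a = \sum_(q <- F2) (if `[< decomp R eta a q.1 q.2 >] then x q.1 q.2 else 0).
Proof.
move=> Fa; case: (pselect (exists b g, decomp R eta a b g)) => [[b [g hd]]|nd]; last first.
  by rewrite y_nodecomp // big_if_zero // => q _ hd; case: nd; exists q.1, q.2.
have [bp gp eLa'] := L_decomp hd.
have [eLa hre] := L_Dset.
have Lxi_lt k : L R xi k -> R k eta by move=> kL; exact: (L_lt_opow2 hp xip kL).
have hbF : F b.
  move=> k Lbk; have : L R alpha (shift_eta k) by apply: Fa; rewrite eLa'; left; exists k.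
  have kl := L_lt_opow2 hp bp Lbk.
  rewrite eLa => -[[/hre []|[k' k'L ek]]|/Lxi_lt]; first exact: (shift_lt_e hee kl).
    by rewrite -(shift_inj (Lxi_lt _ k'L) kl ek); right.
  by move/(shift_eta_nlt kl).
have hgF : F g by move=> k Lgk; apply: Fa; rewrite eLa'; right.
rewrite (y_decomp hd) (@sum_over_F2 _ (b, g)) //.
move=> [b' g'] /=; split; last by case=> -> ->.
move=> hd'; have [bp' gp' eLa''] := L_decomp hd'.
have [e1 e2] : L R g' = L R g /\ L R b' = L R b.
  apply: (shift_setU_inj (hee := hee)); do ?[move=> z zz; exact: (L_lt_opow2 hp _ zz)].
  by rewrite -eLa'' eLa'.
by rewrite (L_inj e1) (L_inj e2).
Qed.

Lemma wjoin_as_sum e' : F e' ->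
  wjoin R x e' = \sum_(q <- F2) (if `[< L R e' = L R q.1 `|` L R q.2 >] then x q.1 q.2 else 0).
Proof.
move=> Fe'; rewrite /wjoin (fsbig_seq (r := F2)) ?fset_uniq //.
by move=> q /= eq; apply/in_F2; split => z hz; apply: Fe'; rewrite eq; [left|right].
Qed.

Lemma join_in_F b g : F b -> F g -> exists2 z, F z & L R z = L R b `|` L R g.
Proof.
move=> Fb Fg; have := @L_sub_ex alpha (cnfU (Lcnf b) (Lcnf g)); rewrite /= !Lcnf_L.
case=> [z [/Fb|/Fg]//|z Lz]; exists z => //.
by rewrite /F /= Lz => k [/Fb|/Fg].
Qed.

Lemma decomp_in_F b g : F b -> F g -> x b g <> 0 ->
  exists2 a, F a & forall a1, decomp R eta a1 b g <-> a1 = a.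
Proof.
move=> Fb Fg xbg.
have [bp gp] : R b p /\ R g p.
  by split; apply: contrapT => nq; apply: xbg; apply: (x_supp hp); [left|right].
have F_xi c : F c -> R c p -> L R c `<=` L R xi.
  by move=> Fc cp k kL; apply: (L_lt_eta_xi (L_lt_opow2 hp cp kL)); exact: Fc.
have [a [hd La]] := decomp_ex bp gp (F_xi _ Fb bp) (F_xi _ Fg gp).
exists a; first exact: La.
move=> a1; split => [hd1|->//].
by have [_ _ e1] := L_decomp hd1; have [_ _ e2] := L_decomp hd; apply: L_inj; rewrite e1 e2.
Qed.

(* Both sides are [\sum_(q in F x F) x q]: a pair of formal subsets of [alpha] has exactly one
   join, and, when [x q != 0], exactly one [2^eta q.1 + q.2], both formally below [alpha]. *)
Lemma fsum_wjoin_eq : fsum R (wjoin R x) alpha = fsum R y alpha.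
Proof.
have finF := finite_formal_subsets alpha.
rewrite /fsum (fsbig_finite _ _ finF) (fsbig_finite _ _ finF) -/F.
rewrite (eq_big_seq _ (fun a ha => wjoin_as_sum (iffLR (in_F a) ha))).
rewrite [RHS](eq_big_seq _ (fun a ha => y_as_sum (iffLR (in_F a) ha))).
rewrite exchange_big [RHS]exchange_big /=.
apply: eq_big_seq => q /in_F2 [Fq1 Fq2].
case: (pselect (x q.1 q.2 = 0)) => xq; first by rewrite !big_if_zero.
have [z Fz Lz] := join_in_F Fq1 Fq2.
have [a Fa hd] := decomp_in_F Fq1 Fq2 xq.
rewrite (@big_if_single _ _ _ _ _ z) ?(@big_if_single _ _ _ _ _ a) ?fset_uniq //.
- exact/in_F.
- exact/in_F.
- by move=> e'; split => [|->//]; rewrite -Lz => /L_inj.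
Qed.

End DsetElement.
End Decomposition.
End DoubleSum.
End Cardinal.
End CantorNormalForm.

Unset Implicit Arguments.
Local Open Scope ring_scope.

Theorem mainTheorem5 (K : choiceType) (R : K -> K -> Prop)
    (U : set (set K)) (eta : K) (x : K -> K -> int) (y : K -> int) :
  infinite_cardinal R ->
  superfine R U ->
  (forall p, opow2 R eta p -> forall b g, ~ R b p \/ ~ R g p -> x b g = 0) ->
  (forall a b g, decomp R eta a b g -> y a = x b g) ->
  (forall a, ~ (exists b g, decomp R eta a b g) -> y a = 0) ->
  ueq U (fsum R (wjoin R x)) (fsum R y).
Proof.
(* Any cone will do: only [Dset R eta] matters. *)
move=> [sR [[f0 _] hcard]] [[_ _ Umono _ _] hsf] x_supp y_decomp y_nodecomp.
rewrite /ueq; apply: (Umono (Dset R eta `&` cone R (f0 0%N))); last exact: hsf.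
move=> al [[xi [a' [e [q [p [r [s [t [[hee hq hp xip] [hr hs ht ha]]]]]]]]]] _].
exact: (fsum_wjoin_eq sR hcard x_supp y_decomp y_nodecomp hee hp hq xip hr hs ht ha).
Qed.
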